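(* Let $p>2$ be prime and let $\mathcal{C}$ be a $\mathbb{Z}_p\mathbb{Z}_{p^2}$-additive code, i.e. a subgroup of $\mathbb{Z}_p^\alpha\times\mathbb{Z}_{p^2}^\beta$. Then the code $C=\Phi(\mathcal{C})\subseteq\mathbb{Z}_p^{\alpha+p\beta}$ is linear over $\mathbb{Z}_p$ if and only if $pP'(\mathbf{u},\mathbf{v})\in\mathcal{C}$ for all $\mathbf{u},\mathbf{v}\in\mathcal{C}$.
   Context: The Gray map $\phi:\mathbb{Z}_{p^2}\to\mathbb{Z}_p^p$ is $\phi(\theta)=\theta''(1,\ldots,1)+\theta'(0,1,\ldots,p-1)$ where $\theta=\theta''p+\theta'$, $\theta',\theta''\in\{0,\ldots,p-1\}$; and $\Phi(\mathbf{x},\mathbf{y})=(\mathbf{x},\phi(y_1),\ldots,\phi(y_\beta))$ for $\mathbf{x}\in\mathbb{Z}_p^\alpha$, $\mathbf{y}\in\mathbb{Z}_{p^2}^\beta$. For $\mathbf{u}=(u_1,\ldots,u_{\alpha+\beta}),\mathbf{v}=(v_1,\ldots,v_{\alpha+\beta})\in\mathbb{Z}_p^\alpha\times\mathbb{Z}_{p^2}^\beta$, write $u_i=u_i''p+u_i'$, $v_i=v_i''p+v_i'$ ($u_i',v_i'\in\{0,\ldots,p-1\}$) for $i>\alpha$. Then $pP'(\mathbf{u},\mathbf{v})\in\mathbb{Z}_p^\alpha\times\mathbb{Z}_{p^2}^\beta$ is the vector whose first $\alpha$ coordinates are $0$ and whose coordinate $i>\alpha$ equals $p(p-1)\in\mathbb{Z}_{p^2}$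 if $u_i'+v_i'\ge p$ and $0$ otherwise. *)

From HB Require Import structures.
From mathcomp Require Import all_boot all_order all_algebra.
Set Implicit Arguments. Unset Strict Implicit. Unset Printing Implicit Defensive.
Import GRing.Theory.
Local Open Scope ring_scope.

(* Ambient group Z_p^alpha x Z_{p^2}^beta (p prime, so 'Z_p and 'Z_(p^2) are
   the genuine rings Z/pZ and Z/p^2Z). *)
Definition ZpZp2 (p a b : nat) := ('rV['Z_p]_a * 'rV['Z_(p ^ 2)]_b)%type.

Definition additive_code (p a b : nat) (C : {set ZpZp2 p a b}) : Prop :=
  0 \in C /\ (forall u v, u \in C -> v \in C -> u - v \in C).

(* Gray map phi : Z_{p^2} -> Z_p^p,
   phi(theta) = theta''(1,...,1) + theta'(0,1,...,p-1), theta = theta'' p + theta'.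
   gray_at p t r is the r-th coordinate (0 <= r < p) of phi(t). *)
Definition gray_at (p : nat) (t : 'Z_(p ^ 2)) (r : nat) : 'Z_p :=
  ((val t %/ p)%N)%:R + ((val t %% p)%N)%:R * r%:R.

Definition gray (p : nat) (t : 'Z_(p ^ 2)) : 'rV['Z_p]_p :=
  \row_(r < p) gray_at t r.

(* Phi(x, y) = (x, phi(y_1), ..., phi(y_beta)); coordinate alpha + k*p + r
   (k < beta, r < p) of the result is the r-th coordinate of phi(y_k). *)
Definition Gray (p a b : nat) (u : ZpZp2 p a b) : 'rV['Z_p]_(a + p * b) :=
  \row_(i < a + p * b)
    match split i with
    | inl j => u.1 0 j
    | inr k =>
        match (insub (val k %/ p)%N : option 'I_b) with
        | Some kb => gray_at (u.2 0 kb) (val k %% p)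
        | None => 0 (* unreachable: val k < p * b *)
        end
    end.

Definition Gray_image (p a b : nat) (Cc : {set ZpZp2 p a b}) : {set 'rV['Z_p]_(a + p * b)} :=
  [set Gray u | u in Cc].

Definition Zp_linear (p n : nat) (C : {set 'rV['Z_p]_n}) : Prop :=
  0 \in C /\ (forall x y, x \in C -> y \in C -> x + y \in C)
  /\ (forall (c : 'Z_p) x, x \in C -> c *: x \in C).

Definition pP' (p a b : nat) (u v : ZpZp2 p a b) : ZpZp2 p a b :=
  (0, \row_(i < b)
        (if (p <= (val (u.2 ord0 i) %% p) + (val (v.2 ord0 i) %% p))%N
         then ((p * (p - 1))%N)%:R else 0)).

From mathcomp Require Import all_boot all_order all_algebra.
From mathcomp Require Import ring.
Set Implicit Arguments. Unset Strict Implicit. Unset Printing Implicit Defensive.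
Import GRing.Theory.
Local Open Scope ring_scope.

(* The Gray image of t = t'' p + t' is the affine function r |-> t'' + t' r
   on Z_p.  Adding s and t in Z_{p^2} adds the digits, except for the carry
   c = [p <= s' + t'] from the low digit into the high digit, so
   phi(s + t) = phi(s) + phi(t) + c (1, ..., 1); adding c p (p - 1) = - c p
   takes the carry back.  Hence Phi(u) + Phi(v) = Phi(u + v + pP'(u, v)), and
   since Phi is injective, Phi(C) is closed under addition exactly when C
   contains every pP'(u, v).  Closure under addition already gives
   Z_p-linearity, as every scalar of Z_p is a natural multiple of 1. *)

Lemma additive_codeD (p a b : nat) (C : {set ZpZp2 p a b}) u v :
  additive_code C -> u \in C -> v \in C -> u + v \in C.
Proof. by case=> C0 CB Cu Cv; rewrite -[v]opprK -[- v]sub0r !CB. Qed.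

Lemma addr_closed_Zp_linear (p n : nat) (C : {set 'rV['Z_p]_n}) :
  0 \in C -> (forall x y, x \in C -> y \in C -> x + y \in C) -> Zp_linear C.
Proof.
move=> C0 CD; split=> //; split=> // c x Cx.
rewrite -[c]natr_Zp scaler_nat.
by elim: (nat_of_ord c) => [|k IHk]; rewrite ?mulr0n // mulrS CD.
Qed.

Lemma val_ZpD (m : nat) (x y : 'Z_m) :
  (1 < m)%N -> val (x + y) = ((val x + val y) %% m)%N.
Proof.
by move=> m_gt1 /=; move: (nat_of_ord x + nat_of_ord y)%N => n; rewrite Zp_cast.
Qed.

Lemma val_Zp_lt (m : nat) (x : 'Z_m) : (1 < m)%N -> (val x < m)%N.
Proof. by case: m x => [|[|m]] // x _; apply: ltn_ord. Qed.

Section GrayDigits.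

Variable p : nat.
Hypothesis p_gt1 : (1 < p)%N.

Let p_gt0 : (0 < p)%N. Proof. exact: ltnW. Qed.
Let p2_gt1 : (1 < p ^ 2)%N.
Proof. by rewrite (ltn_trans p_gt1) // -{1}[p]expn1 ltn_exp2l. Qed.

Definition gray_nat (N r : nat) : 'Z_p := (N %/ p)%:R + (N %% p)%:R * r%:R.

Lemma gray_natE N r : gray_nat N r = (N %/ p)%:R + N%:R * r%:R.
Proof. by rewrite /gray_nat Zp_nat_mod. Qed.

Lemma gray_natDMp N q r : gray_nat (N + q * p) r = gray_nat N r + q%:R.
Proof. by rewrite !gray_natE divnDMl // !natrD natrM pchar_Zp //; ring. Qed.

Lemma gray_natD N M r :
  gray_nat (N + M) r = gray_nat N r + gray_nat M r + (p <= N %% p + M %% p)%N%:R.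
Proof. by rewrite !gray_natE divnD // !natrD; ring. Qed.

Lemma gray_nat_modp2 N r : gray_nat (N %% p ^ 2) r = gray_nat N r.
Proof.
rewrite [in RHS](divn_eq N (p ^ 2)) addnC expnS expn1 mulnA gray_natDMp.
by rewrite natrM pchar_Zp // mulr0 addr0.
Qed.

Lemma gray_at_mod (t : 'Z_(p ^ 2)) N r :
  val t = N %[mod p ^ 2] -> gray_at t r = gray_nat N r.
Proof. by move=> tN; rewrite -gray_nat_modp2 -tN gray_nat_modp2. Qed.

Definition carry (s t : 'Z_(p ^ 2)) : 'Z_(p ^ 2) :=
  if (p <= val s %% p + val t %% p)%N then (p * (p - 1))%:R else 0.

Lemma gray_at_carry (s t : 'Z_(p ^ 2)) r :
  gray_at (s + t + carry s t) r = gray_at s r + gray_at t r.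
Proof.
set c := (p <= val s %% p + val t %% p)%N.
have val_carry : val (carry s t) = c * (p - 1) * p %[mod p ^ 2].
  rewrite /carry -/c; case: c; last by rewrite mul0n.
  by rewrite [val _]/= val_Zp_nat // modn_mod mul1n mulnC.
rewrite (@gray_at_mod _ (val s + val t + c * (p - 1) * p)%N); last first.
  by rewrite !val_ZpD // modn_mod modnDml -modnDmr val_carry modnDmr.
rewrite gray_natDMp gray_natD -/c -addrA -natrD.
have -> : (c + c * (p - 1) = c * p)%N by case: (c); rewrite ?mul1n ?subnKC.
by rewrite natrM pchar_Zp // mulr0 addr0.
Qed.

Lemma gray_at_inj (s t : 'Z_(p ^ 2)) :
  (forall r, (r < p)%N -> gray_at s r = gray_at t r) -> s = t.
Proof.
move=> st; have hi := st 0%N p_gt0; have lo := st 1%N p_gt1.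
rewrite /gray_at !mulr0 !addr0 in hi.
rewrite /gray_at hi !mulr1 in lo; move/addrI: lo => lo.
have div_lt (x : 'Z_(p ^ 2)) : (val x %/ p < p)%N.
  by rewrite ltn_divLR // mulnn val_Zp_lt.
move/(congr1 (@nat_of_ord _)): hi; rewrite !val_Zp_nat // !modn_small // => hi.
move/(congr1 (@nat_of_ord _)): lo; rewrite !val_Zp_nat // !modn_mod => lo.
by apply: val_inj; rewrite /= (divn_eq (val s) p) (divn_eq (val t) p) hi lo.
Qed.

End GrayDigits.

Section GrayMap.

Variables p a b : nat.
Hypothesis p_gt1 : (1 < p)%N.
Implicit Types u v : ZpZp2 p a b.

Lemma Gray_lshift u j : Gray u 0 (lshift (p * b) j) = u.1 0 j.
Proof. by rewrite mxE (unsplitK (inl _ j)). Qed.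

Lemma Gray_rshift u (k : 'I_b) r (kr : (k * p + r < p * b)%N) :
  (r < p)%N -> Gray u 0 (rshift a (Ordinal kr)) = gray_at (u.2 0 k) r.
Proof.
move=> r_lt_p; rewrite mxE (unsplitK (inr _ (Ordinal kr))) /=.
rewrite divnMDl ?(ltnW p_gt1) // divn_small // addn0 modnMDl modn_small //.
by rewrite -[X in insub X]/(val k) valK.
Qed.

Lemma Gray0 : Gray (0 : ZpZp2 p a b) = 0.
Proof.
apply/rowP => i; rewrite !mxE; case: (split i) => [j|k] /=; first by rewrite mxE.
by case: insub => [kb|] //; rewrite mxE /gray_at div0n mod0n mul0r addr0.
Qed.

Lemma Gray_add u v : Gray u + Gray v = Gray (u + v + pP' u v).
Proof.
apply/rowP => i; rewrite !mxE; case: (split i) => [j|k] /=.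
  by rewrite !mxE addr0.
case: insub => [kb|]; last by rewrite addr0.
by rewrite !mxE -gray_at_carry.
Qed.

Lemma Gray_inj : injective (@Gray p a b).
Proof.
move=> [u1 u2] [v1 v2] /rowP uv; congr (_, _); apply/rowP.
  by move=> j; have := uv (lshift _ j); rewrite !Gray_lshift.
move=> k; apply: gray_at_inj => // r r_lt_p.
have kr : (k * p + r < p * b)%N.
  apply: (@leq_trans (p * k.+1)); first by rewrite mulnSr mulnC ltn_add2l.
  by rewrite leq_mul2l ltn_ord orbT.
by have := uv (rshift _ (Ordinal kr)); rewrite !Gray_rshift.
Qed.

End GrayMap.

Theorem lemma4 (p alpha beta : nat) (hp : prime p) (hp2 : (2 < p)%N)
  (Cc : {set ZpZp2 p alpha beta}) (HC : additive_code Cc) :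
  Zp_linear (Gray_image Cc) <->
  (forall u v, u \in Cc -> v \in Cc -> pP' u v \in Cc).
Proof.
have p_gt1 := prime_gt1 hp.
have CD := additive_codeD HC.
split=> [[_ [GD _]] u v Cu Cv | CP].
- have /imsetP [w Cw] : Gray u + Gray v \in Gray_image Cc by rewrite GD ?imset_f.
  rewrite Gray_add // => /(Gray_inj p_gt1) uvw.
  have -> : pP' u v = w - (u + v) by rewrite -uvw addrC addKr.
  by case: HC => _ CB; rewrite CB ?CD.
- apply: addr_closed_Zp_linear => [|_ _ /imsetP [u Cu ->] /imsetP [v Cv ->]].
    by rewrite -Gray0 imset_f //; case: HC.
  by rewrite Gray_add // imset_f // !CD ?CP.
Qed.
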